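(* Let $m_{11},m_{12},m_{13}\in k$ with $(m_{11},m_{12},m_{13})\neq0$ and $m_{12}l_1^2+m_{13}l_2^2=m_{11}$ where $l_1=l_2=0$, and let $M=\begin{pmatrix}m_{11}&m_{12}&m_{13}\\ l_1m_{11}&l_1m_{12}&l_1m_{13}\\ l_2m_{11}&l_2m_{12}&l_2m_{13}\end{pmatrix}$. Then: (1) if $m_{12}\neq0$ and $m_{13}\neq0$, then $\mathcal{A}_{\mathcal{O}_{-1}(k^3)}(M)\cong\mathcal{A}_{\mathcal{O}_{-1}(k^3)}(E_{12}+E_{13})$; (2) if $m_{13}=0,m_{12}\neq0$, or $m_{12}=0,m_{13}\neq0$, then $\mathcal{A}_{\mathcal{O}_{-1}(k^3)}(M)\cong\mathcal{A}_{\mathcal{O}_{-1}(k^3)}(E_{12})$.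
   Context: $k$ is an algebraically closed field of characteristic zero. $E_{ij}$ denotes the $3\times3$ matrix unit with $1$ in position $(i,j)$ and $0$ elsewhere. For $M=(m_{ij})\in M_3(k)$, $\mathcal{A}_{\mathcal{O}_{-1}(k^3)}(M)$ is the connected cochain DG algebra whose underlying graded algebra is generated by degree-one $x_1,x_2,x_3$ subject to $x_ix_j=-x_jx_i$ ($i<j$), with differential determined by $\partial(x_i)=\sum_j m_{ij}x_j^2$ and the Leibniz rule; $\cong$ means isomorphism of DG algebras. *)

From HB Require Import structures.
From mathcomp Require Import all_boot all_order all_algebra.
From mathcomp Require Import mpoly.
Set Implicit Arguments. Unset Strict Implicit. Unset Printing Implicit Defensive.
Import Order.TTheory GRing.Theory.
Local Open Scope ring_scope.

(* Concrete model of the graded algebra O_{-1}(k^3) = k<x1,x2,x3>/(x_i x_j + x_j x_i, i<j):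
   underlying k-vector space with basis the ordered monomials x1^a x2^b x3^c,
   represented by {mpoly k[3]} (monomial m <-> x1^(m 0) x2^(m 1) x3^(m 2));
   the multiplication is the skew one:
   (x1^a x2^b x3^c)(x1^d x2^e x3^f) = (-1)^((b+c)d + c e) x1^(a+d) x2^(b+e) x3^(c+f). *)

Section SkewAlg.
Variable k : fieldType.

Definition Om1 := {mpoly k[3]}.

Definition skew_sign (m n : 'X_{1..3}) : k :=
  (-1) ^+ ((m (inord 1) + m (inord 2)) * n (inord 0) + m (inord 2) * n (inord 1))%N.

Definition smul (p q : Om1) : Om1 :=
  \sum_(m <- msupp p) \sum_(n <- msupp q)
     (p@_m * q@_n * skew_sign m n) *: 'X_[m + n].

(* the generator x_(i+1), i : 'I_3 *)
Definition gen (i : 'I_3) : Om1 := 'X_i.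

Definition is_homog (d : nat) (p : Om1) : bool :=
  all (fun m : 'X_{1..3} => mdeg m == d) (msupp p).

Definition is_diff (M : 'M[k]_3) (d : Om1 -> Om1) : Prop :=
  [/\ forall (c : k) (p q : Om1), d (c *: p + q) = c *: d p + d q,
      forall (n : nat) (p q : Om1), is_homog n p ->
        d (smul p q) = smul (d p) q + (-1) ^+ n *: smul p (d q)
    & forall i : 'I_3, d (gen i) = \sum_(j < 3) M i j *: smul (gen j) (gen j)].

Definition is_dg_iso (d d' : Om1 -> Om1) (f : Om1 -> Om1) : Prop :=
  [/\ forall (c : k) (p q : Om1), f (c *: p + q) = c *: f p + f q,
      forall p q : Om1, f (smul p q) = smul (f p) (f q),
      f 1 = 1,
      forall (n : nat) (p : Om1), is_homog n p -> is_homog n (f p)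
    & bijective f /\ forall p : Om1, f (d p) = d' (f p)].

Definition dg_isomorphic (M N : 'M[k]_3) : Prop :=
  forall d d' : Om1 -> Om1, is_diff M d -> is_diff N d' ->
    exists f : Om1 -> Om1, is_dg_iso d d' f.

(* matrix unit E_ij (1-based in the paper; here 0-based ordinals) *)
Definition Eunit (i j : 'I_3) : 'M[k]_3 := delta_mx i j.

Definition mkM (m11 m12 m13 l1 l2 : k) : 'M[k]_3 :=
  \matrix_(i < 3, j < 3) (nth 0 [:: 1; l1; l2] i * nth 0 [:: m11; m12; m13] j).
End SkewAlg.

From HB Require Import structures.
From mathcomp Require Import all_boot all_order all_algebra all_fingroup.
From mathcomp Require Import mpoly ring.
Set Implicit Arguments.
Unset Strict Implicit.
Unset Printing Implicit Defensive.

Import GRing.Theory.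
Local Open Scope ring_scope.

(* Since l1 = l2 = 0, the relation forces m11 = 0, so d x1 = m12 x2^2 + m13 x3^2
   and d x2 = d x3 = 0.  A graded algebra automorphism f with f x_i = c_i x_(tau i)
   (tau a permutation) is a DG isomorphism A(M) -> A(N) as soon as
   M_ij c_j^2 = c_i N_(tau i, tau j): then f d and d' f are f-derivations that agree
   on the generators, hence everywhere.  Such automorphisms are given by monomial
   maps x^m |-> w(m) x^(sigma m) whose weight w absorbs the skew signs.  Rescaling
   x2 and x3 by square roots of 1/m12 and 1/m13 gives (1); rescaling x1 by m12, or
   by m13 after exchanging x2 and x3 (which costs the sign (-1)^(bc) on
   x1^a x2^b x3^c), gives (2). *)

Lemma mnm_ind n (Q : 'X_{1..n} -> Prop) :
  Q 0%MM -> (forall i m, Q m -> Q (U_(i) + m)%MM) -> forall m, Q m.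
Proof.
move=> Q0 QU m; move Hd: (mdeg m) => d; elim: d m Hd => [|d IH] m Hm.
  by move/eqP: Hm; rewrite mdeg_eq0 => /eqP ->.
have [i mi] : exists i, m i != 0%N.
  case: (pickP (fun i => m i != 0%N)) => [i mi|m0]; first by exists i.
  by move: Hm; rewrite mdegE big1 // => i _; apply/eqP/negbFE/m0.
set m' := (m - U_(i))%MM.
have Em : m = (U_(i) + m')%MM by rewrite addmC submK // lep1mP.
rewrite Em; apply: QU; apply: IH.
by move: Hm; rewrite Em mdegD mdeg1 add1n => -[].
Qed.

Section SkewPolynomials.
Variable k : fieldType.
Local Notation P := (Om1 k).

Section LinearMaps.
Variable f : P -> P.
Hypothesis Lf : linear f.
Let fL : {linear P -> P} := HB.pack f (GRing.isLinear.Build k P P *:%R f Lf).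

Lemma lin0 : f 0 = 0. Proof. exact: (raddf0 fL). Qed.
Lemma linD : {morph f : p q / p + q}. Proof. exact: (raddfD fL). Qed.
Lemma linZ : scalable f. Proof. exact: (linearZZ fL). Qed.
Lemma lin_sum I (r : seq I) (F : I -> P) :
  f (\sum_(i <- r) F i) = \sum_(i <- r) f (F i).
Proof. exact: (raddf_sum fL). Qed.

End LinearMaps.

Lemma linear_id : linear (@id P). Proof. by []. Qed.

Lemma linear_comp (f g : P -> P) : linear f -> linear g -> linear (f \o g).
Proof. by move=> Lf Lg c p q; rewrite /= Lg Lf. Qed.

Lemma linear_mpolyX_eq (f g : P -> P) : linear f -> linear g ->
  (forall m, f 'X_[m] = g 'X_[m]) -> f =1 g.
Proof.
move=> Lf Lg fg p; rewrite (mpolyE p) !lin_sum //; apply: eq_bigr => m _.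
by rewrite !linZ // fg.
Qed.

Definition linext (F : 'X_{1..3} -> P) (p : P) : P :=
  \sum_(m <- msupp p) p@_m *: F m.

Lemma linext_seqE F p s : uniq s -> {subset msupp p <= s} ->
  linext F p = \sum_(m <- s) p@_m *: F m.
Proof.
move=> us sub; rewrite [RHS](bigID (mem (msupp p))) /= [X in _ + X]big1 ?addr0.
  rewrite -[RHS]big_filter; apply/perm_big/uniq_perm.
  - exact: msupp_uniq.
  - exact: filter_uniq.
  - by move=> m; rewrite mem_filter andb_idr //; apply: sub.
by move=> m /memN_msupp_eq0 ->; rewrite scale0r.
Qed.

Lemma linext_is_linear F : linear (linext F).
Proof.
move=> c p q; pose s := undup (msupp p ++ msupp q ++ msupp (c *: p + q)).
have us : uniq s := undup_uniq _.
rewrite !(linext_seqE F us); last 3 first.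
1-3: by move=> m mp; rewrite mem_undup !mem_cat mp ?orbT.
rewrite scaler_sumr -big_split; apply: eq_bigr => m _.
by rewrite mcoeffD mcoeffZ scalerDl scalerA.
Qed.

Lemma linextX F m : linext F 'X_[m] = F m.
Proof. by rewrite /linext msuppX big_seq1 mcoeffX eqxx scale1r. Qed.

Lemma smul_linextl p q :
  smul p q = linext (fun m => linext (fun n => skew_sign k m n *: 'X_[m + n]) q) p.
Proof.
rewrite /smul /linext; apply: eq_bigr => m _; rewrite scaler_sumr.
by apply: eq_bigr => n _; rewrite !scalerA.
Qed.

Lemma smul_linextr p q :
  smul p q = linext (fun n => linext (fun m => skew_sign k m n *: 'X_[m + n]) p) q.
Proof.
rewrite /smul /linext exchange_big; apply: eq_bigr => n _; rewrite scaler_sumr.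
by apply: eq_bigr => m _; rewrite !scalerA [q@_n * _]mulrC.
Qed.

Lemma smul_linearl (q : P) : linear (fun p : P => smul p q).
Proof. by move=> c p1 p2; rewrite !smul_linextl linext_is_linear. Qed.

Lemma smul_linearr (p : P) : linear (smul p).
Proof. by move=> c q1 q2; rewrite !smul_linextr linext_is_linear. Qed.

Lemma smulX a b : smul 'X_[a] 'X_[b] = skew_sign k a b *: 'X_[a + b] :> P.
Proof. by rewrite smul_linextl !linextX. Qed.

Lemma smul1r (p : P) : smul 1 p = p.
Proof.
apply: (linear_mpolyX_eq (smul_linearr 1) linear_id _ p) => m.
by rewrite -mpolyX0 smulX /skew_sign !mnm0E !mul0n expr0 scale1r add0m.
Qed.

Lemma smulr1 (p : P) : smul p 1 = p.
Proof.
apply: (linear_mpolyX_eq (smul_linearl 1) linear_id _ p) => m.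
by rewrite -mpolyX0 smulX /skew_sign !mnm0E !muln0 expr0 scale1r addm0.
Qed.

Lemma skew_sign_sqr m n : skew_sign k m n * skew_sign k m n = 1.
Proof. by rewrite -expr2 sqrr_sign. Qed.

Lemma mpolyXU_smul i m :
  'X_[U_(i) + m] = skew_sign k U_(i) m *: smul (gen k i) 'X_[m] :> P.
Proof. by rewrite /gen smulX scalerA skew_sign_sqr scale1r. Qed.

Lemma homogX m : is_homog (mdeg m) ('X_[m] : P).
Proof. by rewrite /is_homog msuppX /= eqxx. Qed.

Lemma homog1 : is_homog 0 (1 : P).
Proof. by rewrite -mpolyX0 /is_homog msuppX /= mdeg0. Qed.

Lemma homog_gen i : is_homog 1 (gen k i).
Proof. by rewrite -(mdeg1 i) homogX. Qed.

Definition graded_alg_iso (f : P -> P) : Prop :=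
  [/\ linear f, {morph f : p q / smul p q}, f 1 = 1,
      forall n p, is_homog n p -> is_homog n (f p) & bijective f].

Section MonomialMap.
Variables (sigma : 'X_{1..3} -> 'X_{1..3}) (w : 'X_{1..3} -> k).
Hypothesis sigmaD : {morph sigma : a b / (a + b)%MM}.
Hypothesis mdeg_sigma : forall m, mdeg (sigma m) = mdeg m.
Hypothesis sigma_bij : bijective sigma.
Hypothesis w_neq0 : forall m, w m != 0.
Hypothesis wM : forall a b,
  w (a + b)%MM * skew_sign k a b = w a * w b * skew_sign k (sigma a) (sigma b).

Definition mono_map : P -> P := linext (fun m => w m *: 'X_[sigma m]).

Lemma mono_map_is_linear : linear mono_map.
Proof. exact: linext_is_linear. Qed.

Lemma mono_mapX m : mono_map 'X_[m] = w m *: 'X_[sigma m].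
Proof. exact: linextX. Qed.

Lemma mono_mapM : {morph mono_map : p q / smul p q}.
Proof.
move=> p q; pose Lm := mono_map_is_linear.
apply: (@linear_mpolyX_eq (fun p => mono_map (smul p q))
  (fun p => smul (mono_map p) (mono_map q))) => [||a].
- exact: linear_comp Lm (smul_linearl q).
- exact: linear_comp (smul_linearl _) Lm.
apply: (@linear_mpolyX_eq (fun q => mono_map (smul 'X_[a] q))
  (fun q => smul (mono_map 'X_[a]) (mono_map q))) => [||b].
- exact: linear_comp Lm (smul_linearr _).
- exact: linear_comp (smul_linearr _) Lm.
rewrite smulX (linZ Lm) !mono_mapX (linZ (smul_linearl _)) (linZ (smul_linearr _)).
by rewrite smulX !scalerA sigmaD mulrC wM.
Qed.

Lemma mono_map1 : mono_map 1 = 1.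
Proof.
have sigma0 : sigma 0%MM = 0%MM by apply/eqP; rewrite -mdeg_eq0 mdeg_sigma mdeg0.
have sign0 : skew_sign k 0%MM 0%MM = 1 by rewrite /skew_sign !mnm0E expr0.
have w0 : w 0%MM = 1.
  apply/(mulfI (w_neq0 0%MM)); have := wM 0%MM 0%MM.
  by rewrite add0m sigma0 sign0 !mulr1.
by rewrite -mpolyX0 mono_mapX sigma0 w0 scale1r.
Qed.

Lemma mono_map_homog n p : is_homog n p -> is_homog n (mono_map p).
Proof.
move=> /allP homp; apply/allP => m' /msupp_sum_le /flattenP [_ /mapP [m mp ->]].
move/msuppZ_le/msuppZ_le; rewrite msuppX inE => /eqP ->; rewrite mdeg_sigma.
by apply: homp; move: mp; rewrite mem_filter.
Qed.

Lemma mono_map_bij : bijective mono_map.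
Proof.
have [sigma' sigmaK sigma'K] := sigma_bij.
pose g := linext (fun m => (w (sigma' m))^-1 *: 'X_[sigma' m]).
have Lg : linear g := linext_is_linear _.
exists g => p.
- apply: (linear_mpolyX_eq (linear_comp Lg mono_map_is_linear) linear_id) => m /=.
  by rewrite mono_mapX (linZ Lg) /g linextX sigmaK scalerA mulrC mulVf ?scale1r.
- apply: (linear_mpolyX_eq (linear_comp mono_map_is_linear Lg) linear_id) => m /=.
  rewrite /g linextX (linZ mono_map_is_linear) mono_mapX sigma'K.
  by rewrite scalerA mulVf ?scale1r.
Qed.

Lemma mono_map_graded_alg_iso : graded_alg_iso mono_map.
Proof.
split; [exact: mono_map_is_linear | exact: mono_mapM | exact: mono_map1 |
  exact: mono_map_homog | exact: mono_map_bij].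
Qed.

End MonomialMap.

Lemma diff1 (M : 'M[k]_3) (d : P -> P) : is_diff M d -> d 1 = 0.
Proof.
case=> _ dM _; have := dM 0%N 1 1 homog1.
rewrite smul1r smulr1 expr0 scale1r smul1r => d1.
by apply/(addrI (d 1)); rewrite addr0 -d1.
Qed.

Section DGIsomorphism.
Variables (M N : 'M[k]_3) (d d' f : P -> P).
Hypotheses (dM : is_diff M d) (d'N : is_diff N d') (f_iso : graded_alg_iso f).

Lemma diff_commute_of_gen :
  (forall i, f (d (gen k i)) = d' (f (gen k i))) -> forall p, f (d p) = d' (f p).
Proof.
move=> fd_gen; have [Lf fM f1 f_homog _] := f_iso.
have [Ld dD _] := dM; have [Ld' d'D _] := d'N.
apply: (linear_mpolyX_eq (linear_comp Lf Ld) (linear_comp Ld' Lf)) => /=.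
elim/mnm_ind => [|i m IH]; first by rewrite mpolyX0 f1 (diff1 dM) (diff1 d'N) lin0.
rewrite mpolyXU_smul (linZ Ld) !(linZ Lf) (linZ Ld'); congr (_ *: _).
rewrite (dD _ _ _ (homog_gen i)) (linD Lf) (linZ Lf) !fM fd_gen IH.
by rewrite -(d'D _ _ _ (f_homog _ _ (homog_gen i))).
Qed.

End DGIsomorphism.

Lemma dg_isomorphic_of_graded_alg_iso (M N : 'M[k]_3) f (c : 'I_3 -> k)
    (tau : {perm 'I_3}) :
  graded_alg_iso f -> (forall i, f (gen k i) = c i *: gen k (tau i)) ->
  (forall i j, M i j * c j ^+ 2 = c i * N (tau i) (tau j)) -> dg_isomorphic M N.
Proof.
move=> f_iso f_gen cMN d d' dM d'N; exists f.
have [Lf fM f1 f_homog f_bij] := f_iso; split=> //; split=> //.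
apply: (diff_commute_of_gen dM d'N f_iso) => i.
have [_ _ ->] := dM; have [Ld' _ d'_gen] := d'N.
rewrite f_gen (linZ Ld') d'_gen [in RHS](reindex_inj (@perm_inj _ tau)).
rewrite scaler_sumr lin_sum //.
apply: eq_bigr => j _; rewrite (linZ Lf) fM f_gen (linZ (smul_linearl _)).
by rewrite (linZ (smul_linearr _)) !scalerA -cMN expr2 mulrA.
Qed.

Definition mweight n (c : 'I_n -> k) (m : 'X_{1..n}) : k := \prod_i c i ^+ m i.

Lemma mweightD n (c : 'I_n -> k) a b :
  mweight c (a + b)%MM = mweight c a * mweight c b.
Proof. by rewrite /mweight -big_split; apply: eq_bigr => i _; rewrite mnmDE exprD. Qed.

Lemma mweightU n (c : 'I_n -> k) i : mweight c U_(i) = c i.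
Proof.
rewrite /mweight (bigD1 i) //= mnm1E eqxx expr1 big1 ?mulr1 // => j /negbTE ji.
by rewrite mnm1E eq_sym ji expr0.
Qed.

Lemma mweight_neq0 n (c : 'I_n -> k) m : (forall i, c i != 0) -> mweight c m != 0.
Proof. by move=> c_neq0; apply/prodf_neq0 => i _; apply: expf_neq0. Qed.

Lemma dg_isomorphic_scale (M N : 'M[k]_3) (c : 'I_3 -> k) : (forall i, c i != 0) ->
  (forall i j, M i j * c j ^+ 2 = c i * N i j) -> dg_isomorphic M N.
Proof.
move=> c_neq0 cMN.
have f_iso : graded_alg_iso (mono_map id (mweight c)).
  apply: mono_map_graded_alg_iso => // [|m|a b].
  - by exists id.
  - exact: mweight_neq0.
  - by rewrite mweightD.
apply: (dg_isomorphic_of_graded_alg_iso (tau := 1%g) f_iso) => [i|i j].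
  by rewrite /gen mono_mapX mweightU perm1.
by rewrite !perm1.
Qed.

Lemma ord_eq_inord n (i : 'I_n.+1) m : (m <= n)%N -> (i == inord m) = (i == m :> nat).
Proof. by move=> m_le_n; rewrite -val_eqE /= inordK. Qed.

Definition swap23 : {perm 'I_3} := tperm (inord 1) (inord 2).

Lemma swap23K : involutive swap23.
Proof. exact: tpermK. Qed.

Lemma swap23_0 : swap23 (inord 0) = inord 0.
Proof. by rewrite tpermD // ord_eq_inord // inordK. Qed.

Lemma swap23_1 : swap23 (inord 1) = inord 2.
Proof. exact: tpermL. Qed.

Lemma swap23_2 : swap23 (inord 2) = inord 1.
Proof. exact: tpermR. Qed.

Definition mswap23 (m : 'X_{1..3}) : 'X_{1..3} := [multinom m (swap23 j) | j < 3].

Definition swap23_sign (m : 'X_{1..3}) : k := (-1) ^+ (m (inord 1) * m (inord 2)).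

Lemma swap23_signU i : swap23_sign U_(i) = 1.
Proof.
rewrite /swap23_sign !mnm1E; case: eqP => [->|_]; last by rewrite mul0n expr0.
by rewrite !ord_eq_inord // !inordK.
Qed.

Lemma mswap23U i : mswap23 U_(i) = U_(swap23 i)%MM.
Proof. by apply/mnmP => j; rewrite !mnmE (canF_eq swap23K). Qed.

Lemma skew_sign_mswap23 a b :
  swap23_sign (a + b)%MM * skew_sign k a b =
  swap23_sign a * swap23_sign b * skew_sign k (mswap23 a) (mswap23 b).
Proof.
rewrite /swap23_sign /skew_sign !mnmE swap23_0 swap23_1 swap23_2 -!exprD.
move: (a (inord 0)) (a (inord 1)) (a (inord 2)) => a0 a1 a2.
move: (b (inord 0)) (b (inord 1)) (b (inord 2)) => b0 b1 b2.
have -> : ((a1 + b1) * (a2 + b2) + ((a1 + a2) * b0 + a2 * b1) =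
   a1 * a2 + b1 * b2 + ((a2 + a1) * b0 + a1 * b2) + (a2 * b1) * 2)%N by ring.
by rewrite exprD exprM sqrr_sign mulr1.
Qed.

Lemma dg_isomorphic_scale_swap23 (M N : 'M[k]_3) (c : 'I_3 -> k) :
  (forall i, c i != 0) ->
  (forall i j, M i j * c j ^+ 2 = c i * N (swap23 i) (swap23 j)) -> dg_isomorphic M N.
Proof.
move=> c_neq0 cMN.
pose w m := mweight c m * swap23_sign m.
have f_iso : graded_alg_iso (mono_map mswap23 w).
  apply: mono_map_graded_alg_iso => [a b|m||m|a b].
  - by apply/mnmP => j; rewrite !mnmE.
  - exact: mdeg_mperm.
  - by exists mswap23 => m; apply/mnmP => j; rewrite !mnmE swap23K.
  - by rewrite /w mulf_neq0 ?mweight_neq0 ?signr_eq0.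
  - by rewrite /w mweightD -mulrA skew_sign_mswap23; ring.
apply: (dg_isomorphic_of_graded_alg_iso f_iso _ cMN) => i.
by rewrite /gen mono_mapX mswap23U /w mweightU swap23_signU mulr1.
Qed.

Lemma dg_isomorphic_mkM_E01_E02 (m12 m13 a b : k) :
  m12 * a ^+ 2 = 1 -> m13 * b ^+ 2 = 1 ->
  dg_isomorphic (mkM 0 m12 m13 0 0)
    (Eunit k (inord 0) (inord 1) + Eunit k (inord 0) (inord 2)).
Proof.
move=> m12a m13b; apply: (@dg_isomorphic_scale _ _ (fun i => nth 0 [:: 1; a; b] i)).
  have sqr_neq0 (x y : k) : y * x ^+ 2 = 1 -> x != 0.
    by apply: contra_eq_neq => ->; rewrite expr0n /= mulr0 eq_sym oner_eq0.
  case=> [[|[|[|i]]] Hi] //=.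
  - exact: oner_neq0.
  - exact: sqr_neq0 m12a.
  - exact: sqr_neq0 m13b.
move=> i j; case: i => [[|[|[|i]]] Hi] //; case: j => [[|[|[|j]]] Hj] //;
  by rewrite !mxE !ord_eq_inord //= ?(mul0r, mul1r, mulr0, mulr1, add0r, addr0).
Qed.

Lemma dg_isomorphic_mkM_E01 (m12 : k) : m12 != 0 ->
  dg_isomorphic (mkM 0 m12 0 0 0) (Eunit k (inord 0) (inord 1)).
Proof.
move=> m12_neq0; apply: (@dg_isomorphic_scale _ _ (fun i => nth 0 [:: m12; 1; 1] i)).
  by case=> [[|[|[|i]]] Hi] //=; rewrite oner_neq0.
move=> i j; case: i => [[|[|[|i]]] Hi] //; case: j => [[|[|[|j]]] Hj] //;
  by rewrite !mxE !ord_eq_inord //= ?(mul0r, mul1r, mulr0, mulr1, expr1n).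
Qed.

Lemma dg_isomorphic_mkM_E02_E01 (m13 : k) : m13 != 0 ->
  dg_isomorphic (mkM 0 0 m13 0 0) (Eunit k (inord 0) (inord 1)).
Proof.
move=> m13_neq0.
apply: (@dg_isomorphic_scale_swap23 _ _ (fun i => nth 0 [:: m13; 1; 1] i)).
  by case=> [[|[|[|i]]] Hi] //=; rewrite oner_neq0.
move=> i j; rewrite !mxE !(canF_eq swap23K) swap23_0 swap23_1.
case: i => [[|[|[|i]]] Hi] //; case: j => [[|[|[|j]]] Hj] //;
  by rewrite !ord_eq_inord //= ?(mul0r, mul1r, mulr0, mulr1, expr1n).
Qed.

End SkewPolynomials.

Lemma closed_field_root (k : closedFieldType) n (x : k) : exists y : k, y ^+ n.+1 = x.
Proof.
have [y Hy] := @solve_monicpoly k n.+1 (nth 0 [:: x]) isT.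
exists y; rewrite Hy big_ord_recl big1 ?addr0 => [|i _].
  by rewrite expr0 mulr1.
by rewrite /= nth_nil mul0r.
Qed.

Theorem lemma7p1 (k : closedFieldType) (hchar : [pchar k] =i pred0)
  (m11 m12 m13 l1 l2 : k) (hl1 : l1 = 0) (hl2 : l2 = 0)
  (hnz : [|| m11 != 0, m12 != 0 | m13 != 0])
  (heq : m12 * l1 ^+ 2 + m13 * l2 ^+ 2 = m11) :
  (m12 != 0 -> m13 != 0 ->
     dg_isomorphic (mkM m11 m12 m13 l1 l2) (Eunit k (inord 0) (inord 1) + Eunit k (inord 0) (inord 2)))
  /\
  ((m13 = 0 /\ m12 != 0) \/ (m12 = 0 /\ m13 != 0) ->
     dg_isomorphic (mkM m11 m12 m13 l1 l2) (Eunit k (inord 0) (inord 1))).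
Proof.
subst l1 l2; move: heq; rewrite expr0n /= !mulr0 addr0 => <-.
split=> [m12_neq0 m13_neq0|[[-> m12_neq0]|[-> m13_neq0]]].
- have [a a2] := closed_field_root 1 m12^-1; have [b b2] := closed_field_root 1 m13^-1.
  by apply: (@dg_isomorphic_mkM_E01_E02 _ _ _ a b); rewrite ?a2 ?b2 mulfV.
- exact: dg_isomorphic_mkM_E01.
- exact: dg_isomorphic_mkM_E02_E01.
Qed.
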